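(* Let $X$ be a marked Dynkin diagram with $d$ nodes whose generalized Cartan matrix is symmetrizable, and for $n\ge d$ let $X_n$ be the extended diagram described in the context. Then the sequence $\{\det(X_n): n\ge d\}$ is an arithmetic progression.
   Context: A marked Dynkin diagram $X$ is a Dynkin diagram with nodes numbered $1,\dots,d$, node $d$ being the distinguished node, with generalized Cartan matrix $C(X)$. For $n\ge d$, $X_n$ is the Dynkin diagram obtained by attaching a simply-laced chain of $n-d$ new nodes $d+1,d+2,\dots,n$ to node $d$; its generalized Cartan matrix $C(X_n)$ is the $n\times n$ matrix with $C(X)$ as its upper-left $d\times d$ block, diagonal entries $2$ for $i>d$, entries $C_{i,i+1}=C_{i+1,i}=-1$ for $d\le i<n$, and all other entries $0$. For a Dynkin diagram $Y$, $\det(Y)$ denotes the determinant of its generalized Cartan matrix. *)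

From mathcomp Require Import all_boot all_order all_algebra.
Set Implicit Arguments. Unset Strict Implicit. Unset Printing Implicit Defensive.
Import Order.TTheory GRing.Theory Num.Theory.
Local Open Scope ring_scope.

Definition is_gcm (d : nat) (C : 'M[int]_d) : Prop :=
  (forall i, C i i = 2) /\
  (forall i j, i != j -> C i j <= 0) /\
  (forall i j, C i j = 0 <-> C j i = 0).

(* Symmetrizable (Kac): C = D B with D an invertible diagonal matrix and
   B symmetric; i.e. there are nonzero d_i with C i j * d_j = C j i * d_i. *)
Definition symmetrizable (d : nat) (C : 'M[int]_d) : Prop :=
  exists dv : 'I_d -> rat, (forall i, dv i != 0) /\
    forall i j, (C i j)%:~R * dv j = (C j i)%:~R * dv i.

(* Entry of C at nat indices (0 outside the d x d block). *)
Definition mxget (d : nat) (C : 'M[int]_d) (i j : nat) : int :=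
  match @insub nat (fun k => k < d)%N _ i, @insub nat (fun k => k < d)%N _ j with
  | Some i', Some j' => C i' j'
  | _, _ => 0
  end.

(* Cartan matrix of X_n: C in the upper-left d x d block, a simply laced
   chain of new nodes d+1..n attached to node d (0-based: nodes d..n-1,
   attached to node d-1). *)
Definition ext_cartan (d : nat) (C : 'M[int]_d) (n : nat) : 'M[int]_n :=
  \matrix_(i < n, j < n)
    if (i < d)%N && (j < d)%N then mxget C i j
    else if i == j :> nat then 2
    else if (i.+1 == j :> nat) || (j.+1 == i :> nat) then -1
    else 0.

From mathcomp Require Import all_boot all_order all_algebra zify ring.
Import GRing.Theory.
Set Implicit Arguments. Unset Strict Implicit.
Local Open Scope ring_scope.

(* Expanding det X_(n+2) along the row of its last node, which is adjacent
   only to the previous node, gives the continuant recurrence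
   det X_(n+2) = 2 det X_(n+1) - det X_n once the chain has started
   (n + 1 >= d).  A sequence with vanishing second differences is affine. *)

Section SecondDifference.

Variables (V : zmodType) (f : nat -> V) (d : nat).
Hypothesis f_rec : forall m, (d <= m)%N -> f m.+2 = f m.+1 *+ 2 - f m.

Lemma second_difference_const m : f (d + m).+1 - f (d + m)%N = f d.+1 - f d.
Proof.
elim: m => [|m IHm]; first by rewrite addn0.
by rewrite addnS f_rec ?leq_addr // -IHm mulr2n addrAC addrK.
Qed.

Lemma second_difference_affine m : f (d + m)%N = f d + (f d.+1 - f d) *+ m.
Proof.
elim: m => [|m IHm]; first by rewrite addn0 addr0.
rewrite addnS -[f (d + m).+1](subrK (f (d + m)%N)).
by rewrite second_difference_const IHm mulrS addrCA.
Qed.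

End SecondDifference.

Definition lead_submx {R : Type} {n : nat} (A : 'M[R]_n.+1) : 'M[R]_n :=
  row' ord_max (col' ord_max A).

Lemma det_lead_submx_rec (R : comPzRingType) n (A : 'M[R]_n.+2) :
  (forall j : 'I_n.+2, (j < n)%N -> A ord_max j = 0) ->
  (forall i : 'I_n.+2, (i < n)%N -> A i ord_max = 0) ->
  \det A = A ord_max ord_max * \det (lead_submx A)
         - A ord_max (inord n) * A (inord n) ord_max
           * \det (lead_submx (lead_submx A)).
Proof.
move=> Arow0 Acol0; set p : 'I_n.+2 := inord n.
have p_val : p = n :> nat by rewrite inordK.
have lift_p_max : lift p ord_max = ord_max.
  by apply: val_inj; rewrite /= /bump p_val leqnn.
have minor_p : \det (row' ord_max (col' p A))
    = A p ord_max * \det (lead_submx (lead_submx A)).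
  rewrite (expand_det_col _ ord_max) big_ord_recr /= big1 ?add0r; last first.
    move=> i _; rewrite !mxE lift_p_max Acol0 ?mul0r //=.
    by rewrite /bump (ltn_geF (leqW (ltn_ord i))) add0n.
  rewrite /cofactor !mxE lift_p_max addnn -muln2 exprM sqrr_sign mul1r.
  have -> : lift ord_max ord_max = p.
    by apply: val_inj; rewrite /= p_val /bump ltnn.
  congr (_ * \det _); apply/matrixP=> i j; rewrite !mxE; congr (A _ _).
  have j_lt : (j < n)%N := ltn_ord j.
  apply: val_inj; rewrite /= /bump p_val (ltn_geF j_lt) add0n.
  by rewrite (ltn_geF j_lt) (ltn_geF (leqW j_lt)).
rewrite (expand_det_row _ ord_max) !big_ord_recr /= big1 ?add0r; last first.
  by move=> j _; rewrite Arow0 ?mul0r //=; apply: ltn_ord.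
have -> : widen_ord (leqnSn n.+1) ord_max = p.
  by apply: val_inj; rewrite /= p_val.
rewrite /cofactor minor_p p_val /= addSn !addnn exprS -!muln2 !exprM.
by rewrite !sqrr_sign mulr1 !mul1r mulN1r mulrN mulrA addrC.
Qed.

Section ExtendedCartan.

Variables (d : nat) (C : 'M[int]_d).

Lemma lead_submx_ext_cartan n : lead_submx (ext_cartan C n.+1) = ext_cartan C n.
Proof. by apply/matrixP=> i j; rewrite !mxE !lift_max. Qed.

Lemma ext_cartan_chainE {n} (i j : 'I_n) : (d <= maxn i j)%N ->
  ext_cartan C n i j =
    if i == j :> nat then 2
    else if (i.+1 == j :> nat) || (j.+1 == i :> nat) then -1 else 0.
Proof. by move=> dij; rewrite mxE ifF //; apply/negbTE; lia. Qed.

Lemma det_ext_cartan_rec n : (d <= n.+1)%N ->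
  \det (ext_cartan C n.+2)
  = 2 * \det (ext_cartan C n.+1) - \det (ext_cartan C n).
Proof.
move=> dn; rewrite det_lead_submx_rec; last 2 first.
- by move=> j jn; rewrite ext_cartan_chainE /= ?ifF //; lia.
- by move=> i jn; rewrite ext_cartan_chainE /= ?ifF //; lia.
rewrite !lead_submx_ext_cartan !ext_cartan_chainE ?inordK /=; try lia.
rewrite eqxx !orbT (gtn_eqF (ltnSn n)) (ltn_eqF (ltnSn n)) /=.
by rewrite mulrNN !mul1r.
Qed.

End ExtendedCartan.

Theorem lemma2p2 (d : nat) (C : 'M[int]_d) :
  (0 < d)%N -> is_gcm C -> symmetrizable C ->
  exists a b : int, forall n : nat, (d <= n)%N ->
    \det (ext_cartan C n) = a + b * n%:Z.
Proof.
move=> _ _ _.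
pose f n := \det (ext_cartan C n).
have f_rec m : (d <= m)%N -> f m.+2 = f m.+1 *+ 2 - f m.
  by move=> dm; rewrite -mulr_natl; apply: det_ext_cartan_rec; apply: leqW.
have f_affine := second_difference_affine f_rec.
exists (f d - (f d.+1 - f d) * d%:Z), (f d.+1 - f d) => n dn.
rewrite -/(f n) -(subnKC dn) f_affine -mulr_natr natz PoszD; ring.
Qed.
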